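(* Let $S=\{\rho_1=0<\rho_2<\cdots\}\neq\mathbb{N}_0$ be an Arf numerical semigroup with conductor $c=\rho_r$. If $j$ is an integer with $\rho_{r-1}+r\le j<c+r$, then $\beta(\rho_j)=r-1$.
   Context: A numerical semigroup is a submonoid $S$ of $(\mathbb{N}_0,+)$ with finite complement, with elements listed increasingly. $S$ is Arf if $\rho_i+\rho_j-\rho_k\in S$ for all positive integers $i\ge j\ge k$. The conductor $c$ is the smallest integer such that all integers $\ge c$ lie in $S$, with $c=\rho_r$ (so $r\ge2$ when $S\neq\mathbb{N}_0$). For $\rho\in S$: $A[\rho]=\{p\in S:\ \rho-p\in S\}$ and $\beta(\rho)=\max\{j\ge1:\ \rho_1,\dots,\rho_j\in A[\rho]\ \text{and}\ 2\rho_j\le\rho\}$. *)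

From mathcomp Require Import all_boot.
Set Implicit Arguments. Unset Strict Implicit. Unset Printing Implicit Defensive.

Definition numerical_semigroup (S : pred nat) : Prop :=
  S 0 /\ (forall a b, S a -> S b -> S (a + b)) /\
  (exists N, forall n, N <= n -> S n).

(* rho lists the elements of S increasingly, indexed from 1:
   rho 1 < rho 2 < ... and {rho i | i >= 1} = S.  (rho 0 is irrelevant.) *)
Definition increasing_enum (S : pred nat) (rho : nat -> nat) : Prop :=
  (forall i, 0 < i -> S (rho i)) /\
  (forall n, S n -> exists2 i, 0 < i & rho i = n) /\
  (forall i k, 0 < i -> i < k -> rho i < rho k).

Definition Arf (S : pred nat) (rho : nat -> nat) : Prop :=
  forall i j k, 1 <= k -> k <= j -> j <= i -> S (rho i + rho j - rho k).

Definition is_conductor (S : pred nat) (c : nat) : Prop :=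
  (forall n, c <= n -> S n) /\
  (forall c', (forall n, c' <= n -> S n) -> c <= c').

(* A[x] = {p in S : x - p in S} (with p <= x, the subtraction being in Z). *)
Definition in_A (S : pred nat) (x p : nat) : Prop :=
  S p /\ p <= x /\ S (x - p).

Definition beta_cand (S : pred nat) (rho : nat -> nat) (x j : nat) : Prop :=
  1 <= j /\ (forall k, 1 <= k -> k <= j -> in_A S x (rho k)) /\ 2 * rho j <= x.

Definition beta_is (S : pred nat) (rho : nat -> nat) (x b : nat) : Prop :=
  beta_cand S rho x b /\ (forall j, beta_cand S rho x j -> j <= b).

From mathcomp Require Import all_boot zify.

(* Above the conductor c = rho r the enumeration is rho (r + k) = c + k, so
   rho j = c + (j - r) and the hypothesis on j reads c + rho (r - 1) <= rho j < 2 c.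
   The lower bound puts rho j - rho k into [c, oo) for every k <= r - 1, and gives
   2 rho (r - 1) <= rho j; the upper bound excludes every index j' >= r, as then
   2 rho j' >= 2 c. *)

Section IncreasingEnum.

Context {S : pred nat} {rho : nat -> nat}.
Hypothesis rhoE : increasing_enum S rho.

Lemma increasing_enum_leq {i k} : 0 < i -> i <= k -> rho i <= rho k.
Proof.
have [_ [_ rho_lt]] := rhoE => i_gt0.
rewrite leq_eqVlt => /orP[/eqP-> //|lt_ik].
exact/ltnW/rho_lt.
Qed.

Lemma increasing_enum_first : S 0 -> rho 1 = 0.
Proof.
have [_ [rho_onto rho_lt]] := rhoE => /rho_onto[i i_gt0 rho_i].
case: (ltngtP 1 i) => [lt1i||->]; [|lia|by []].
by have := rho_lt 1 i isT lt1i; rewrite rho_i.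
Qed.

Context {r : nat}.
Hypotheses (r_gt0 : 0 < r) (S_above : forall n, rho r <= n -> S n).

Lemma increasing_enum_above_conductor k : rho (r + k) = rho r + k.
Proof.
have [_ [rho_onto rho_lt]] := rhoE.
elim: k => [|k IHk]; first by rewrite !addn0.
have [i i_gt0 rho_i] := rho_onto _ (S_above _ (leq_addr k.+1 (rho r))).
have step : rho (r + k) < rho (r + k.+1) by apply: rho_lt; lia.
case: (ltngtP i (r + k.+1)) => [lt_i|gt_i|eq_i]; last by rewrite -eq_i rho_i.
- have : rho i <= rho (r + k) by apply: increasing_enum_leq; lia.
  lia.
- have : rho (r + k.+1) < rho i by apply: rho_lt; lia.
  lia.
Qed.

Lemma beta_cand_pred_conductor x :
  rho (r - 1) + rho r <= x -> 0 < r - 1 -> beta_cand S rho x (r - 1).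
Proof.
have [rho_S [_ rho_lt]] := rhoE => le_x r1_gt0.
have lt_r : rho (r - 1) < rho r by apply: rho_lt; lia.
split=> //; split; last by lia.
move=> k k_gt0 le_k; have := increasing_enum_leq k_gt0 le_k.
by split; [exact: rho_S | split; [lia | apply: S_above; lia]].
Qed.

Lemma beta_cand_lt_conductor x j :
  x < 2 * rho r -> beta_cand S rho x j -> j < r.
Proof.
move=> lt_x [_ [_ le_j]]; rewrite ltnNge; apply/negP => le_rj.
by have := increasing_enum_leq r_gt0 le_rj; lia.
Qed.

Lemma conductor_index_gt1 : S 0 -> (exists n, ~~ S n) -> 1 < r.
Proof.
move=> S0 [n Sn']; move: r_gt0; rewrite leq_eqVlt => /orP[/eqP r1|//].
by move: Sn'; rewrite S_above // -r1 (increasing_enum_first S0).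
Qed.

End IncreasingEnum.

Theorem mainTheorem9 (S : pred nat) (rho : nat -> nat) (r j : nat) :
  numerical_semigroup S ->
  increasing_enum S rho ->
  (exists n, ~~ S n) ->
  Arf S rho ->
  is_conductor S (rho r) ->
  1 <= r ->
  rho (r - 1) + r <= j -> j < rho r + r ->
  beta_is S rho (rho j) (r - 1).
Proof.
move=> [S0 _] rhoE S_proper _ [S_above _] r_gt0 lo_j hi_j.
have r_gt1 := conductor_index_gt1 rhoE r_gt0 S_above S0 S_proper.
have rho_j : rho j = rho r + (j - r).
  by rewrite -(increasing_enum_above_conductor rhoE r_gt0 S_above); congr rho; lia.
have rho_j_lt : rho j < 2 * rho r by lia.
split; first by apply: beta_cand_pred_conductor => //; lia.
by move=> j' /(beta_cand_lt_conductor rhoE r_gt0 _ _ rho_j_lt); lia.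
Qed.
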